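(* Let $G^*=(V^*,E^* )$ be a weakly connected digraph, let $v_0\in V^*$, and let $L_0,\dots,L_\ell$ be the layers defined below; set $L_{\ell+1}=\emptyset$. Then for every directed path $Q$ in $G^*$ there exists $j\in\{0,\dots,\ell\}$ such that all vertices of $Q$ lie in $L_j\cup L_{j+1}$. In particular, if $G^*$ contains an $s$-$t$ dipath, then for some $j$ the subgraph induced by $L_j\cup L_{j+1}$ contains an $s$-$t$ dipath.
   Context: Layers: $L_0$ is the set of vertices of $V^*$ reachable from $v_0$ in $G^*$. For $j\ge1$: if $j$ is odd, $L_j$ is the set of vertices $v\in V^*\setminus\bigcup_{j'<j}L_{j'}$ that can reach some vertex of $L_{j-1}$ in $G^*$; if $j$ is even, $L_j$ is the set of vertices $v\in V^*\setminus\bigcup_{j'<j}L_{j'}$ reachable from some vertex of $L_{j-1}$ in $G^*$. The process continues until all vertices are covered; $\ell$ is the index of the last layer. *)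

(* Finite digraph G* = (T, e) with e : rel T (arc x -> y iff e x y). *)
From mathcomp Require Import all_boot.
Set Implicit Arguments. Unset Strict Implicit. Unset Printing Implicit Defensive.

Section Layers.
Variables (T : finType) (e : rel T).

Definition weakly_connected : Prop :=
  forall x y : T, connect (fun a b => e a b || e b a) x y.

(* layers_upto v0 n = the list [:: L_n; L_{n-1}; ...; L_0] *)
Fixpoint layers_upto (v0 : T) (n : nat) : seq {set T} :=
  match n with
  | 0 => [:: [set v | connect e v0 v]]
  | n'.+1 =>
      let prev := layers_upto v0 n' in
      let Lprev := head set0 prev in
      let covered := \bigcup_(A <- prev) A in
      let Ln := if odd n
                then [set v | (v \notin covered) && [exists u in Lprev, connect e v u]]
                else [set v | (v \notin covered) && [exists u in Lprev, connect e u v]] in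
      Ln :: prev
  end.

Definition layer (v0 : T) (j : nat) : {set T} := head set0 (layers_upto v0 j).

Definition covered_upto (v0 : T) (j : nat) : {set T} := \bigcup_(i < j.+1) layer v0 i.

Definition last_layer_index (v0 : T) (l : nat) : Prop :=
  covered_upto v0 l = [set: T] /\ forall j, j < l -> covered_upto v0 j != [set: T].

Definition dipath (x : T) (p : seq T) : bool := path e x p && uniq (x :: p).

End Layers.

From mathcomp Require Import all_boot zify.
Set Implicit Arguments. Unset Strict Implicit. Unset Printing Implicit Defensive.

(* An even layer is closed under out-arcs and an odd layer under in-arcs, since
   each was grown as a forward (resp. backward) reachability set.  Moreover an
   arc never joins layers whose indices differ by more than one.  Hence a
   dipath that meets an even layer stays in it, and a dipath starting in an odd
   layer L_k can only leave it once, into L_(k-1) or L_(k+1), where it then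
   stays.  No connectivity is needed beyond the layers covering all vertices. *)

Section Layers.
Variables (T : finType) (e : rel T) (v0 : T).

Local Notation L := (layer e v0).
Local Notation covered := (covered_upto e v0).

Lemma big_layers_upto j : \bigcup_(A <- layers_upto e v0 j) A = covered j.
Proof.
elim: j => [|j IHj].
  by rewrite /covered_upto big_ord_recr big_ord0 /= big_seq1 set0U.
by rewrite /covered_upto big_ord_recr /= big_cons -/(covered j) -IHj setUC.
Qed.

Lemma layerS j : L j.+1 =
  if odd j.+1
  then [set v | (v \notin covered j) && [exists u in L j, connect e v u]]
  else [set v | (v \notin covered j) && [exists u in L j, connect e u v]].
Proof. by rewrite /layer /= big_layers_upto. Qed.

Lemma mem_covered v i n : v \in L i -> i <= n -> v \in covered n.
Proof. by move=> vi le_in; apply/bigcupP; exists (Ordinal (le_in : i < n.+1)). Qed.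

Lemma coveredP v n : reflect (exists2 i, i <= n & v \in L i) (v \in covered n).
Proof.
apply: (iffP bigcupP) => [[i _ vi]|[i le_in vi]].
  by exists i; first exact: ltn_ord i.
by exists (Ordinal (le_in : i < n.+1)).
Qed.

Lemma layerS_notin_covered v j : v \in L j.+1 -> v \notin covered j.
Proof. by rewrite layerS; case: ifP => _; rewrite inE => /andP[]. Qed.

Lemma layer_inj v i k : v \in L i -> v \in L k -> i = k.
Proof.
wlog le_ik : i k / i <= k => [wlog_le vi vk|vi vk].
  by case: (leqP i k) => [|/ltnW] cmp; [apply: wlog_le | symmetry; apply: wlog_le].
case: k le_ik vk => [|k] le_ik vk; first by case: i le_ik vi.
case: (ltngtP i k.+1) le_ik => // lt_ik _.
by have := layerS_notin_covered vk; rewrite (mem_covered vi).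
Qed.

Lemma covered_layer_le v n b : v \in covered n -> v \in L b -> b <= n.
Proof. by move=> /coveredP[i le_in vi] vb; rewrite -(layer_inj vi vb). Qed.

Lemma covered_succ v j : (v \notin covered j -> v \in L j.+1) -> v \in covered j.+1.
Proof.
case: (boolP (v \in covered j)) => [/coveredP[i le_ij vi] _ | _ /(_ isT) vj].
  exact: mem_covered vi (leqW le_ij).
exact: mem_covered vj _.
Qed.

Lemma even_layer_out_arc_covered u v a :
  e u v -> u \in L a -> ~~ odd a -> v \in covered a.
Proof.
move=> uv; case: a => [|a].
  rewrite /layer inE => v0u _; apply: (@mem_covered v 0) => //.
  by rewrite /layer inE (connect_trans v0u) ?connect1.
rewrite layerS => + even_a; rewrite (negbTE even_a) inE.
case/andP=> _ /existsP[w /andP[wa wu]].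
apply: covered_succ => v_new; rewrite layerS (negbTE even_a) inE v_new.
by apply/existsP; exists w; rewrite wa (connect_trans wu) ?connect1.
Qed.

Lemma odd_layer_out_arc_covered u v a :
  e u v -> u \in L a -> odd a -> v \in covered a.+1.
Proof.
move=> uv ua odd_a; apply: covered_succ => v_new.
by rewrite layerS /= odd_a inE v_new; apply/existsP; exists u; rewrite ua connect1.
Qed.

Lemma odd_layer_in_arc_covered u v b :
  e u v -> v \in L b -> odd b -> u \in covered b.
Proof.
move=> uv; case: b => [//|b].
rewrite layerS => + odd_b; rewrite odd_b inE.
case/andP=> _ /existsP[w /andP[wb vw]].
apply: covered_succ => u_new; rewrite layerS odd_b inE u_new.
by apply/existsP; exists w; rewrite wb (connect_trans _ vw) ?connect1.
Qed.

Lemma in_arc_covered u v b : e u v -> v \in L b -> u \in covered b.+1.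
Proof.
move=> uv vb; case: (boolP (odd b)) => [odd_b | even_b].
  by have /coveredP[i le_ib ui] := odd_layer_in_arc_covered uv vb odd_b;
    exact: mem_covered ui (leqW le_ib).
apply: covered_succ => u_new; rewrite layerS /= (negbTE even_b) inE u_new.
by apply/existsP; exists v; rewrite vb connect1.
Qed.

Lemma even_layer_out_arc u v a : e u v -> u \in L a -> ~~ odd a -> v \in L a.
Proof.
move=> uv ua even_a.
have /coveredP[b le_ba vb] := even_layer_out_arc_covered uv ua even_a.
case: (eqVneq b a) => [<- // | ne_ba].
case: (boolP (odd b)) => [odd_b | even_b].
  have := covered_layer_le (odd_layer_in_arc_covered uv vb odd_b) ua; lia.
have a_eq : a = b.+1.
  by have := covered_layer_le (in_arc_covered uv vb) ua; lia.
by move: even_a; rewrite a_eq /= even_b.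
Qed.

Lemma odd_layer_out_arc u v a :
  e u v -> u \in L a -> odd a -> v \in L a.-1 :|: L a :|: L a.+1.
Proof.
move=> uv ua odd_a.
have /coveredP[b le_ba vb] := odd_layer_out_arc_covered uv ua odd_a.
have le_ab := covered_layer_le (in_arc_covered uv vb) ua.
have [b_eq|[b_eq|b_eq]] : b = a.-1 \/ b = a \/ b = a.+1 by lia.
all: by rewrite !inE -b_eq vb ?orbT.
Qed.

Lemma even_layer_path x p k :
  path e x p -> x \in L k -> ~~ odd k -> {subset x :: p <= L k}.
Proof.
move=> + + even_k; elim: p x => [|y p IHp] x /=.
  by move=> _ xk z; rewrite inE => /eqP->.
case/andP=> xy yp xk z; rewrite inE => /orP[/eqP-> //|].
exact: IHp yp (even_layer_out_arc xy xk even_k) z.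
Qed.

Lemma odd_layer_path x p k : path e x p -> x \in L k -> odd k ->
  exists2 j, k.-1 <= j <= k & {subset x :: p <= L j :|: L j.+1}.
Proof.
move=> + + odd_k; elim: p x => [|y p IHp] x /=.
  move=> _ xk; exists k; first by rewrite leq_pred leqnn.
  by move=> z /[!inE] /eqP->; rewrite xk.
case/andP=> xy yp xk.
have k_eq : k = k.-1.+1 by rewrite prednK // lt0n; apply: contraTneq odd_k => ->.
have xk' : x \in L k.-1.+1 by rewrite -k_eq.
case/setUP: (odd_layer_out_arc xy xk odd_k) => [/setUP[]|] yb.
- exists k.-1; first by rewrite leqnn leq_pred.
  have even_pred : ~~ odd k.-1 by move: odd_k; rewrite {1}k_eq.
  move=> z; rewrite inE => /orP[/eqP->|]; first by rewrite inE xk' orbT.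
  by move=> /(even_layer_path yp yb even_pred) zk; rewrite inE zk.
- have [j bounds_j sub_j] := IHp y yp yb; exists j => // z.
  rewrite inE => /orP[/eqP->|zp]; last exact: sub_j.
  have [->|->] : j = k.-1 \/ j = k by lia.
    by rewrite inE xk' orbT.
  by rewrite inE xk.
- exists k; first by rewrite leq_pred leqnn.
  have even_succ : ~~ odd k.+1 by rewrite /= odd_k.
  move=> z; rewrite inE => /orP[/eqP->|]; first by rewrite inE xk.
  by move=> /(even_layer_path yp yb even_succ) zk; rewrite inE zk orbT.
Qed.

Lemma path_in_consecutive_layers x p k : path e x p -> x \in L k ->
  exists2 j, k.-1 <= j <= k & {subset x :: p <= L j :|: L j.+1}.
Proof.
move=> xp xk; case: (boolP (odd k)) => [odd_k | even_k].
  exact: odd_layer_path xp xk odd_k.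
exists k; first by rewrite leq_pred leqnn.
by move=> z /(even_layer_path xp xk even_k) zk; rewrite inE zk.
Qed.

End Layers.

Theorem mainTheorem8 (T : finType) (e : rel T) (v0 : T) (l : nat) :
  weakly_connected e ->
  last_layer_index e v0 l ->
  (forall (x : T) (p : seq T), dipath e x p ->
     exists j, j <= l /\
       {subset x :: p <= layer e v0 j :|: layer e v0 j.+1}) /\
  (forall s t : T,
     (exists p : seq T, dipath e s p /\ last s p = t) ->
     exists j, j <= l /\
       exists p : seq T, [/\ dipath e s p, last s p = t &
         {subset s :: p <= layer e v0 j :|: layer e v0 j.+1}]).
Proof.
move=> _ [cover_all _].
have dipath_in_two_layers x p : dipath e x p ->
    exists j, j <= l /\ {subset x :: p <= layer e v0 j :|: layer e v0 j.+1}.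
  case/andP=> xp _.
  have /coveredP[k le_kl xk] : x \in covered_upto e v0 l by rewrite cover_all inE.
  have [j /andP[_ le_jk] sub_j] := path_in_consecutive_layers xp xk.
  by exists j; split; first exact: leq_trans le_jk le_kl.
split=> // s t [p [sp pt]].
have [j [le_jl sub_j]] := dipath_in_two_layers s p sp.
by exists j; split=> //; exists p.
Qed.
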